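(* Let $A$ be a $\star$-hypercentral T-brace whose additive group $(A,+)$ is not periodic, and let $T$ be the torsion subgroup of $(A,+)$. Then $T$ is an ideal of $A$ and the quotient brace $A/T$ is abelian.
   Context: A (left) brace is a set $A$ with two operations $+$ and $\cdot$ such that $(A,+)$ is an abelian group, $(A,\cdot)$ is a group, and $a(b+c)=ab+ac-a$ for all $a,b,c\in A$. Put $a\star b=ab-a-b$. A subbrace is a subset which is a subgroup of both $(A,+)$ and $(A,\cdot)$; a subbrace $L$ is an ideal if $a\star z, z\star a\in L$ for all $a\in A$, $z\in L$, and then the quotient brace $A/L$ is defined. A brace is abelian if $a\star b=0$ for all $a,b$. $A$ is a T-brace if whenever $I$ is an ideal of $J$ and $J$ is an ideal of $A$, then $I$ is an ideal of $A$. The $\star$-center is $\zeta(\star,A)=\{a\in A: a\star x=x\star a=0 \ \forall x\in A\}$. The upper $\star$-central series: $\zeta_0(\star,A)=0$, $\zeta_{\alpha+1}(\star,A)/\zeta_\alpha(\star,A)=\zeta(\star,A/\zeta_\alpha(\star,A))$, unions at limit ordinals; its last term is $\zeta_\infty(\star,A)$. $A$ is $\star$-hypercentral if $A=\zeta_\infty(\star,A)$. *)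

From HB Require Import structures.
From mathcomp Require Import all_boot all_algebra.
Set Implicit Arguments. Unset Strict Implicit. Unset Printing Implicit Defensive.
Import GRing.Theory.
Local Open Scope ring_scope.

Record brace := Brace {
  bT :> zmodType;
  bmul : bT -> bT -> bT;
  bone : bT;
  binv : bT -> bT;
  bmulA : forall a b c, bmul a (bmul b c) = bmul (bmul a b) c;
  bmul1l : forall a, bmul bone a = a;
  bmul1r : forall a, bmul a bone = a;
  bmulVl : forall a, bmul (binv a) a = bone;
  bmulVr : forall a, bmul a (binv a) = bone;
  bdistr : forall a b c, bmul a (b + c) = bmul a b + bmul a c - a
}.

Section BraceDefs.
Variable A : brace.

Definition star (a b : A) : A := bmul a b - a - b.

Definition subbrace (L : A -> Prop) : Prop :=
  [/\ L 0, (forall x y, L x -> L y -> L (x - y)),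
      L (bone A), (forall x y, L x -> L y -> L (bmul x y))
    & (forall x, L x -> L (binv x))].

Definition ideal_of (J I : A -> Prop) : Prop :=
  [/\ subbrace I, (forall x, I x -> J x)
    & forall a z, J a -> I z -> I (star a z) /\ I (star z a)].

Definition ideal (L : A -> Prop) : Prop := ideal_of (fun _ => True) L.

Definition T_brace : Prop :=
  forall I J : A -> Prop, subbrace J -> ideal_of J I -> ideal J -> ideal I.

(* The next term of the upper star-central series: if S = zeta_alpha (an
   ideal), then zeta_{alpha+1}/S = zeta(star, A/S), i.e.
   zeta_{alpha+1} = { a | a*x, x*a in S for all x }. *)
Definition zeta_next (S : A -> Prop) : A -> Prop :=
  fun a => forall x, S (star a x) /\ S (star x a).

(* The terms of the (transfinite) upper star-central series: generated from
   zeta_0 = 0 by successor steps and unions of (nonempty) families of terms. *)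
Inductive zeta_term : (A -> Prop) -> Prop :=
  | zeta_zero : zeta_term (fun x => x = 0)
  | zeta_succ S : zeta_term S -> zeta_term (zeta_next S)
  | zeta_union (P : (A -> Prop) -> Prop) :
      (exists S, P S) -> (forall S, P S -> zeta_term S) ->
      zeta_term (fun x => exists S, P S /\ S x).

Definition zeta_infty : A -> Prop := fun x => exists S, zeta_term S /\ S x.

Definition star_hypercentral : Prop := forall a : A, zeta_infty a.

Definition torsion : A -> Prop := fun x => exists n : nat, (0 < n)%N /\ x *+ n = 0.

Definition add_periodic : Prop := forall x : A, torsion x.

(* A/L abelian: (a+L) star (b+L) = a star b + L = 0 in A/L *)
Definition quotient_abelian (L : A -> Prop) : Prop := forall a b : A, L (star a b).

End BraceDefs.

(* Let T be the torsion subgroup of (A, +) and zetaT the set of a with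
   a ⋆ x, x ⋆ a ∈ T for all x, i.e. the preimage of ζ(⋆, A/T); both claims
   say that zetaT = A.
   Since A is ⋆-hypercentral, each map x ↦ t ⋆ x is locally nilpotent.  For
   t ∈ T with n t = 0, expanding the powers of t in (A, ·) binomially in the
   iterates of t ⋆ - shows that t^M = 0 (the identity of (A, ·)) for
   M = n K!, where (t ⋆ -)^K kills t; expanding t^M ⋆ x = 0 in the same way
   gives M (t ⋆ x) ∈ T by induction on the nilpotency length of x.  Hence
   T ⋆ A ⊆ T.
   Climbing the upper ⋆-central series, it remains to show that zetaT2, the
   preimage of ζ₂(⋆, A/T), is contained in zetaT.  For a ∈ zetaT2, ℤa + zetaT
   is an ideal of A and ℤa + ℤ(a ⋆ a) + T is an ideal of it, hence of A as A
   is a T-brace; so a ⋆ x, x ⋆ a ∈ ℤa + ℤ(a ⋆ a) + T.  Applied to 2a, using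
   (2a) ⋆ (2a) ≡ 4 (a ⋆ a), this shows that either a nonzero multiple of a
   lies in zetaT + T, whence a ∈ zetaT because A/T is torsion-free, or
   a ⋆ a ∈ T; in the latter case a ⋆ x and x ⋆ a are congruent to multiples
   of a, and the same purity argument concludes. *)

From HB Require Import structures.
From mathcomp Require Import all_boot all_algebra.
From mathcomp Require Import ring zify.
Set Implicit Arguments. Unset Strict Implicit. Unset Printing Implicit Defensive.
Import GRing.Theory.
Local Open Scope ring_scope.

Section BraceArithmetic.
Variable A : brace.
Implicit Types a x y : A.

Lemma bmulr0 a : bmul a 0 = a.
Proof.
have := bdistr a 0 0; rewrite addr0 -addrA -{1}[bmul a 0]addr0 => /addrI /eqP.
by rewrite eq_sym subr_eq0 => /eqP.
Qed.

Lemma bone_eq0 : bone A = 0.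
Proof. by rewrite -(bmul1l (0 : A)) bmulr0. Qed.

Lemma bmul0r a : bmul 0 a = a.
Proof. by rewrite -bone_eq0 bmul1l. Qed.

Lemma starD a x y : star a (x + y) = star a x + star a y.
Proof.
rewrite /star bdistr opprD; move: (bmul a x) (bmul a y) => ax ay.
by rewrite !addrA [LHS](ACl (1*3*5*2*4*6)).
Qed.

Lemma star_is_zmod_morphism a : zmod_morphism (star a).
Proof.
have star0 : star a 0 = 0 by apply: (@addIr _ (star a 0)); rewrite -starD addr0 add0r.
move=> x y; rewrite starD; congr (_ + _).
by apply: (@addIr _ (star a y)); rewrite -starD !addNr star0.
Qed.

End BraceArithmetic.

HB.instance Definition _ (A : brace) (a : A) :=
  GRing.isZmodMorphism.Build A A (star a) (star_is_zmod_morphism a).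

Section StarIdentities.
Variable A : brace.
Implicit Types u v x : A.

Lemma bmulE u v : bmul u v = u + v + star u v.
Proof. by rewrite /star -[bmul u v - u - v]addrA -opprD [RHS]addrC subrK. Qed.

Lemma star0l x : star 0 x = 0.
Proof. by rewrite /star bmul0r subr0 subrr. Qed.

Lemma star_bmull u v x : star (bmul u v) x = star u x + star v x + star u (star v x).
Proof.
apply: (@addrI _ (bmul u v + x)); rewrite -bmulE -bmulA.
rewrite [bmul u (bmul v x)]bmulE [bmul v x]bmulE [bmul u v]bmulE.
rewrite [star u (_ + star v x)]starD [star u (v + x)]starD.
move: (star u v) (star u x) (star v x) (star u (star v x)) => suv sux svx susvx.
by rewrite !addrA [LHS](ACl (1*2*5*3*6*4*7)).
Qed.

End StarIdentities.

Lemma ideal_of_star_closed (A : brace) (J I : A -> Prop) :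
  subbrace J -> I 0 -> (forall x y, I x -> I y -> I (x - y)) -> (forall x, I x -> J x) ->
  (forall a z, J a -> I z -> I (star a z) /\ I (star z a)) -> ideal_of J I.
Proof.
move=> [_ _ _ _ JV] I0 IB IJ Istar.
have IN x : I x -> I (- x) by rewrite -sub0r; apply: IB.
have ID x y : I x -> I y -> I (x + y) by move=> Ix /IN Iy; rewrite -[y]opprK; apply: IB.
split=> //; split=> //; first by rewrite bone_eq0.
  by move=> x y Ix Iy; rewrite bmulE; apply/ID/(Istar _ _ (IJ _ Ix) Iy).1; apply: ID.
move=> x Ix; have xV : binv x = - (x + star (binv x) x).
  by apply/eqP; rewrite -addr_eq0 addrA -bmulE bmulVl bone_eq0.
by rewrite xV; apply/IN/ID/(Istar _ _ (JV _ (IJ _ Ix)) Ix).1.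
Qed.

Lemma subrACA (V : zmodType) (x y x' y' : V) : (x - y) - (x' - y') = (x - x') - (y - y').
Proof. by rewrite !opprB addrACA [RHS]addrACA [- x' + _]addrC. Qed.

Local Notation "x ≡ y" := (torsion (x - y)) (at level 70, no associativity).

Section Torsion.
Variable A : brace.
Implicit Types a x y z : A.

Lemma torsion0 : torsion (0 : A).
Proof. by exists 1%N. Qed.

Lemma torsionN x : torsion x -> torsion (- x).
Proof. by case=> n [n_gt0 xn0]; exists n; rewrite mulNrn xn0 oppr0. Qed.

Lemma torsionD x y : torsion x -> torsion y -> torsion (x + y).
Proof.
case=> n [n_gt0 xn0] [m [m_gt0 ym0]]; exists (n * m)%N; split; first by rewrite muln_gt0 n_gt0.
by rewrite mulrnDl mulrnA xn0 mul0rn mulnC mulrnA ym0 mul0rn addr0.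
Qed.

Lemma torsionB x y : torsion x -> torsion y -> torsion (x - y).
Proof. by move=> tx ty; apply/torsionD/torsionN. Qed.

Lemma torsion_sum n (F : 'I_n -> A) :
  (forall i, torsion (F i)) -> torsion (\sum_(i < n) F i).
Proof. by move=> tF; elim/big_ind: _ => //; [apply: torsion0 | apply: torsionD]. Qed.

Lemma torsionMn x k : torsion x -> torsion (x *+ k).
Proof. by case=> n [n_gt0 xn0]; exists n; rewrite -mulrnA mulnC mulrnA xn0 mul0rn. Qed.

Lemma torsionMz x k : torsion x -> torsion (x *~ k).
Proof.
by move=> tx; case: k => k; rewrite ?NegzE ?mulrNz -pmulrn; [|apply: torsionN]; apply: torsionMn.
Qed.

Lemma torsionMnK x k : (0 < k)%N -> torsion (x *+ k) -> torsion x.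
Proof.
move=> k_gt0 [n [n_gt0 xkn0]]; exists (k * n)%N.
by rewrite muln_gt0 k_gt0 mulrnA.
Qed.

Lemma torsionMzK x (k : int) : k != 0 -> torsion (x *~ k) -> torsion x.
Proof.
case: k => k k_neq0; rewrite ?NegzE ?mulrNz -pmulrn; last move/torsionN; rewrite ?opprK.
  by apply: torsionMnK; rewrite lt0n; case: k k_neq0.
exact: torsionMnK.
Qed.

Lemma torsion_starr a x : torsion x -> torsion (star a x).
Proof. by case=> n [n_gt0 xn0]; exists n; rewrite -raddfMn xn0 raddf0. Qed.

Lemma modT_refl x : x ≡ x.
Proof. by rewrite subrr; apply: torsion0. Qed.

Lemma modT_sym x y : x ≡ y -> y ≡ x.
Proof. by move/torsionN; rewrite opprB. Qed.

Lemma modT_trans y x z : x ≡ y -> y ≡ z -> x ≡ z.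
Proof. by move=> txy tyz; rewrite -(subrKA y); apply: torsionD. Qed.

Lemma modTD x y x' y' : x ≡ x' -> y ≡ y' -> x + y ≡ x' + y'.
Proof. by move=> txx' tyy'; rewrite opprD addrACA; apply: torsionD. Qed.

Lemma modTN x y : x ≡ y -> - x ≡ - y.
Proof. by move/torsionN; rewrite opprD. Qed.

Lemma modTB x y x' y' : x ≡ x' -> y ≡ y' -> x - y ≡ x' - y'.
Proof. by move=> txx' /modTN; apply: modTD. Qed.

Lemma modTMz x y k : x ≡ y -> x *~ k ≡ y *~ k.
Proof. by rewrite -mulrzBl; apply: torsionMz. Qed.

Lemma modT_torsionDr x y z : torsion z -> x ≡ y + z -> x ≡ y.
Proof.
move=> tz txyz; suff -> : x - y = x - (y + z) + z by apply: torsionD.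
by rewrite opprD addrA subrK.
Qed.

End Torsion.

Section AdditiveIteration.
Variables (V : zmodType) (f : {additive V -> V}).

Lemma iter_raddf0 j : iter j f 0 = 0.
Proof. by elim: j => //= j ->; rewrite raddf0. Qed.

Lemma iter_raddfMn j x k : iter j f (x *+ k) = iter j f x *+ k.
Proof. by elim: j => //= j ->; rewrite raddfMn. Qed.

Lemma affine_orbit_binomial (v : V) N (s : nat -> V) : iter N f v = 0 ->
  s 0%N = 0 -> (forall m, s m.+1 = v + s m + f (s m)) ->
  forall m, s m = \sum_(j < N) iter j f v *+ 'C(m, j.+1).
Proof.
move=> fNv s0 sS; elim=> [|m IHm]; first by rewrite s0 big1 // => j _; rewrite bin0n.
have shift : \sum_(j < N) iter j f v *+ 'C(m, j) =
             v + \sum_(j < N) iter j.+1 f v *+ 'C(m, j.+1).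
  case: N fNv {IHm} => [/= ->|n fnv]; first by rewrite !big_ord0 addr0.
  rewrite big_ord_recl bin0 big_ord_recr /= -iterS fnv mul0rn addr0 mulr1n.
  by congr (_ + _); apply: eq_bigr => j _; rewrite /bump leq0n.
rewrite sS IHm raddf_sum /=.
under [in X in _ + X = _]eq_bigr do rewrite raddfMn -iterS.
under [RHS]eq_bigr do rewrite binS mulrnDr.
by rewrite big_split /= shift addrCA addrA.
Qed.

End AdditiveIteration.

Lemma dvdn_bin_mul_fact n K j : (0 < j <= K)%N -> (n %| 'C(n * K`!, j))%N.
Proof.
case: j => // j jK; have /dvdnP[q Kq] := dvdn_fact jK.
apply/dvdnP; exists (q * 'C((n * K`!).-1, j))%N.
apply/eqP; rewrite -(eqn_pmul2l (ltn0Sn j)) -mul_bin_diag Kq; apply/eqP.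
ring.
Qed.

Section Hypercentral.
Variable A : brace.
Hypothesis hcA : star_hypercentral A.
Implicit Types a c t u v x y z j : A.

Lemma iter_star_nil t x : exists K, iter K (star t) x = 0.
Proof.
have [S [zS Sx]] := hcA x.
elim: zS x Sx => [x -> | S0 _ IHS x /(_ t)[_ /IHS[K SK]] | P _ _ IHP x [S0 [PS Sx]]].
- by exists 0%N.
- by exists K.+1; rewrite iterSr.
- exact: IHP PS x Sx.
Qed.

(* [iter m (bmul t) 0] is the power t^m in (A, ·). *)
Lemma iter_bmul_torsion_eq0 t : torsion t -> exists2 M, (0 < M)%N & iter M (bmul t) 0 = 0.
Proof.
case=> n [n_gt0 tn0]; have [K tK] := iter_star_nil t t.
exists (n * K`!)%N; first by rewrite muln_gt0 n_gt0 fact_gt0.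
rewrite (affine_orbit_binomial (s := fun m => iter m (bmul t) 0) tK) //; last first.
  by move=> m; rewrite iterS bmulE.
rewrite big1 // => j _; have /dvdnP[c ->] := dvdn_bin_mul_fact n (ltn_ord j : 0 < j.+1 <= K)%N.
by rewrite mulnC mulrnA -iter_raddfMn tn0 iter_raddf0 mul0rn.
Qed.

Lemma torsion_starl t x : torsion t -> torsion (star t x).
Proof.
move=> tt; have [M M_gt0 tM] := iter_bmul_torsion_eq0 tt; have [N] := iter_star_nil t x.
elim: N x => [x /= -> | N IHN y tNy]; first by rewrite raddf0; apply: torsion0.
have tNty : iter N.+1 (star t) (star t y) = 0 by rewrite -iterSr iterS tNy raddf0.
have := affine_orbit_binomial (s := fun m => star (iter m (bmul t) 0) y) tNty
  (star0l y) (fun m => star_bmull t _ y) M.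
rewrite tM star0l big_ord_recl bin1 /= => /eqP; rewrite eq_sym addr_eq0 => /eqP tyM.
apply: (torsionMnK M_gt0); rewrite tyM; apply/torsionN/torsion_sum => i.
apply/torsionMn/IHN; rewrite -iterSr -iterD add0n addnS -addSn addnC iterD.
by rewrite tNy iter_raddf0.
Qed.

Definition zetaT := zeta_next (torsion (A:=A)).

Lemma zetaT_torsion t : torsion t -> zetaT t.
Proof. by move=> tt x; split; [apply: torsion_starl | apply: torsion_starr]. Qed.

Lemma starDl_torsion u v x : torsion v -> star (u + v) x ≡ star u x.
Proof.
move=> tv; set v' := bmul (binv u) (u + v).
have uv : u + v = bmul u v' by rewrite bmulA bmulVr bmul1l.
have tv' : torsion v'.
  rewrite /v' bdistr bmulVl bone_eq0 add0r bmulE addrAC [binv u + v]addrC addrK.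
  exact/torsionD/torsion_starr.
rewrite uv star_bmull -[star u x + _ + _]addrA addrAC subrr add0r.
have tv'x := torsion_starl x tv'.
exact: torsionD tv'x (torsion_starr _ tv'x).
Qed.

Lemma starDl_zetaT u v x : zetaT v -> star (u + v) x ≡ star u x.
Proof.
move=> zv; apply: (@modT_trans _ (star (bmul u v) x)).
  rewrite [u + v](_ : _ = bmul u v + - star u v); last by rewrite bmulE addrK.
  exact/starDl_torsion/torsionN/(zv u).2.
rewrite star_bmull -[star u x + _ + _]addrA addrAC subrr add0r.
exact: torsionD (zv x).1 (torsion_starr _ (zv x).1).
Qed.

Lemma zetaT0 : zetaT 0.
Proof. by move=> x; rewrite star0l raddf0; split; apply: torsion0. Qed.

Lemma zetaTN c : zetaT c -> zetaT (- c).
Proof.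
move=> zc x; split; last by rewrite raddfN; apply/torsionN/(zc x).2.
by have := starDl_zetaT (- c) x zc; rewrite addNr star0l sub0r => /torsionN; rewrite opprK.
Qed.

Lemma zetaTD c d : zetaT c -> zetaT d -> zetaT (c + d).
Proof.
move=> zc zd x; split; last by rewrite raddfD; apply/torsionD; [apply: (zc x).2 | apply: (zd x).2].
by rewrite -(subrK (star c x) (star _ x)); apply/torsionD/(zc x).1/starDl_zetaT.
Qed.

Lemma zetaTB c d : zetaT c -> zetaT d -> zetaT (c - d).
Proof. by move=> zc zd; apply/zetaTD/zetaTN. Qed.

Lemma zetaTMn c k : zetaT c -> zetaT (c *+ k).
Proof. by move=> zc; elim: k => [|k IHk]; [apply: zetaT0 | rewrite mulrSr; apply: zetaTD]. Qed.

Lemma zetaTMz c k : zetaT c -> zetaT (c *~ k).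
Proof.
by move=> zc; case: k => k; rewrite ?NegzE ?mulrNz -pmulrn; [|apply: zetaTN]; apply: zetaTMn.
Qed.

Lemma zetaT_congr c y : zetaT c -> y ≡ c -> zetaT y.
Proof. by move=> zc tyc; rewrite -(subrK c y); apply/zetaTD/zc/zetaT_torsion. Qed.

Definition zetaT2 := zeta_next zetaT.

Lemma starDl_zetaT2 u a x : zetaT2 a -> star (u + a) x ≡ star u x + star a x.
Proof.
move=> za; apply: (@modT_trans _ (star (bmul u a) x)).
  rewrite [u + a](_ : _ = bmul u a + - star u a); last by rewrite bmulE addrK.
  exact/starDl_zetaT/zetaTN/(za u).2.
by rewrite star_bmull addrC addKr; apply: ((za x).1 u).2.
Qed.

Lemma starNl_zetaT2 a x : zetaT2 a -> star (- a) x ≡ - star a x.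
Proof.
rewrite opprK => /(starDl_zetaT2 (- a) x).
by rewrite addNr star0l sub0r => /torsionN; rewrite opprK.
Qed.

Lemma starMnl_zetaT2 a x k : zetaT2 a -> star (a *+ k) x ≡ star a x *+ k.
Proof.
move=> za; elim: k => [|k IHk]; first by rewrite !mulr0n star0l; apply: modT_refl.
by rewrite !mulrSr; apply: (modT_trans (starDl_zetaT2 _ _ za)); apply/modTD/modT_refl.
Qed.

Lemma zetaT2Mn a k : zetaT2 a -> zetaT2 (a *+ k).
Proof.
move=> za x; rewrite raddfMn; split; last exact/zetaTMn/(za x).2.
exact: zetaT_congr (zetaTMn k (za x).1) (starMnl_zetaT2 x k za).
Qed.

Lemma starMzl_zetaT2 a x k : zetaT2 a -> star (a *~ k) x ≡ star a x *~ k.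
Proof.
move=> za; case: k => k; rewrite ?NegzE ?mulrNz -!pmulrn; first exact: starMnl_zetaT2.
apply: (modT_trans (starNl_zetaT2 x (zetaT2Mn k.+1 za))).
exact/modTN/starMnl_zetaT2.
Qed.

Lemma starDl_zetaT_span a c x k : zetaT2 a -> zetaT c -> star (a *~ k + c) x ≡ star a x *~ k.
Proof. by move=> za zc; apply: (modT_trans (starDl_zetaT _ _ zc)); apply: starMzl_zetaT2. Qed.

Lemma zetaT_of_multiple a c (k : int) :
  zetaT2 a -> k != 0 -> zetaT c -> a *~ k ≡ c -> zetaT a.
Proof.
move=> za k_neq0 zc akc; have zak := zetaT_congr zc akc.
move=> x; split; apply: (torsionMzK k_neq0); last by rewrite -raddfMz; apply: (zak x).2.
rewrite -[_ *~ k]subr0; apply: (modT_trans (modT_sym (starMzl_zetaT2 x k za))).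
by rewrite subr0; apply: (zak x).1.
Qed.

Section TBrace.
Hypothesis hTA : T_brace A.

Section Span.
Variable a : A.
Hypothesis za : zetaT2 a.

Definition zetaT_span y := exists n : int, zetaT (y - a *~ n).
Definition torsion_span y := exists n m : int, y ≡ a *~ n + star a a *~ m.

Lemma ideal_zetaT_span : ideal zetaT_span.
Proof.
have zetaT_spanW y : zetaT y -> zetaT_span y by exists 0; rewrite mulr0z subr0.
apply: ideal_of_star_closed => //.
- exact/zetaT_spanW/zetaT0.
- move=> y y' [n zy] [n' zy']; exists (n - n').
  by rewrite mulrzBr subrACA; apply: zetaTB.
- move=> j z _ [n zz]; split; apply: zetaT_spanW.
    rewrite -(subrK (a *~ n) z) raddfD raddfMz.
    exact/zetaTD/zetaTMz/(za j).2/zetaT_torsion/(zz j).2.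
  rewrite -(subrKC (a *~ n) z).
  exact: zetaT_congr (zetaTMz n (za j).1) (starDl_zetaT_span _ _ za zz).
Qed.

Lemma torsion_span_zetaT z : torsion_span z -> zetaT_span z.
Proof.
case=> n [m tz]; exists n; apply: (zetaT_congr (zetaTMz m (za a).1)).
by rewrite -addrA -opprD.
Qed.

Lemma ideal_of_torsion_span : ideal_of zetaT_span torsion_span.
Proof.
apply: ideal_of_star_closed => //.
- by case: ideal_zetaT_span.
- by exists 0, 0; rewrite !mulr0z !addr0; apply: modT_refl.
- move=> y y' [n [m ty]] [n' [m' ty']]; exists (n - n'), (m - m').
  by rewrite !mulrzBr addrACA -opprD; apply: modTB.
- exact: torsion_span_zetaT.
move=> j z [n' zj] /torsion_span_zetaT[n zz]; split; exists 0, (n' * n).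
  rewrite mulr0z add0r mulrzA.
  apply: (@modT_trans _ (star j (a *~ n))); first by rewrite -raddfB; apply: (zz j).2.
  rewrite raddfMz; apply: modTMz.
  by rewrite -(subrKC (a *~ n') j); apply: starDl_zetaT_span.
rewrite mulr0z add0r mulrzA -(subrKC (a *~ n) z).
apply: (modT_trans (starDl_zetaT_span _ _ za zz)); apply: modTMz.
by rewrite -raddfMz -raddfB; apply: (zj a).2.
Qed.

Lemma star_torsion_span x : torsion_span (star x a) /\ torsion_span (star a x).
Proof.
have aI : torsion_span a by exists 1, 0; rewrite mulr1z mulr0z addr0; apply: modT_refl.
have zetaT_span_subbrace : subbrace zetaT_span by case: ideal_zetaT_span.
have [_ _ star_closed] := hTA zetaT_span_subbrace ideal_of_torsion_span ideal_zetaT_span.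
by have [] := star_closed x a I aI.
Qed.

End Span.

Lemma zetaT2_dichotomy a : zetaT2 a -> zetaT a \/ torsion (star a a).
Proof.
move=> za; set w := star a a; set b := a *+ 2.
have [n [m span]] := (star_torsion_span (zetaT2Mn 2 za) a).1; rewrite -/b in span.
have sab : star a b = w *~ 2 by rewrite raddfMn.
have sbb : star b b ≡ w *~ 4 by have := starMnl_zetaT2 b 2 za; rewrite sab -mulrnA.
have bn : b *~ n ≡ w *~ (2 - 4 * m).
  rewrite mulrzBr mulrzA -sab -(addrK (star b b *~ m) (b *~ n)); apply: modT_sym.
  exact/modTB/modT_sym/modTMz/sbb.
have [n0 | n_neq0] := eqVneq n 0.
  right; move: bn; rewrite n0 mulr0z => /modT_sym; rewrite subr0; apply: torsionMzK.
  by apply/eqP; lia.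
left; apply: (zetaT_of_multiple za (k := 2 * n) _ (zetaTMz (2 - 4 * m) (za a).1)).
  by rewrite mulf_neq0.
by rewrite mulrzA.
Qed.

Lemma zetaT2_zetaT a : zetaT2 a -> zetaT a.
Proof.
move=> za; have [// | tw] := zetaT2_dichotomy za.
have zetaT_or_torsion y : zetaT y -> torsion_span a y -> zetaT a \/ torsion y.
  move=> zy [n [m ynm]]; have /modT_torsionDr/(_ ynm) yn := torsionMz m tw.
  have [n0 | n_neq0] := eqVneq n 0; first by right; rewrite -[y]subr0 -(mulr0z a) -n0.
  by left; apply: (zetaT_of_multiple za n_neq0 zy); apply: modT_sym.
move=> x; have [sxa sax] := star_torsion_span za x; split.
  by case: (zetaT_or_torsion _ (za x).1 sax) => // /(_ x)[].
by case: (zetaT_or_torsion _ (za x).2 sxa) => // /(_ x)[].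
Qed.

Lemma zeta_term_zetaT S : zeta_term S -> forall a, S a -> zetaT a.
Proof.
elim=> [a -> | S0 _ IHS a Sa | P _ _ IHP a [S0 [PS Sa]]].
- exact: zetaT0.
- by apply: zetaT2_zetaT => x; split; apply: IHS; [apply: (Sa x).1 | apply: (Sa x).2].
- exact: IHP PS a Sa.
Qed.

End TBrace.

End Hypercentral.

Theorem corollary3 (A : brace) :
  star_hypercentral A -> T_brace A -> ~ add_periodic A ->
  ideal (torsion (A:=A)) /\ quotient_abelian (torsion (A:=A)).
Proof.
move=> hcA hTA _.
have zA (a : A) : zetaT a by have [S [zS Sa]] := hcA a; exact: (zeta_term_zetaT hcA hTA zS Sa).
split; last by move=> a b; apply: (zA a b).1.
apply: ideal_of_star_closed => //; [exact: torsion0 | exact: torsionB |].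
by move=> a z _ _; split; [apply: (zA a z).1 | apply: (zA z a).1].
Qed.
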